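(* Assume $\mathfrak p<\mathfrak t$ and let $\lambda=\mathfrak p$. Assume: (i) $\mathcal B=\{B_\alpha:\alpha<\lambda\}$ exemplifies $\mathfrak p$; (ii) $\kappa<\lambda$ is a regular cardinal and $\bar A=\langle A_i:i<\kappa\rangle\subseteq[\omega]^{\aleph_0}$ is $\subseteq^*$-decreasing such that $A_i\cap B$ is infinite for all $i<\kappa$, $B\in\mathcal B$, and every pseudo-intersection $A$ of $\{A_i:i<\kappa\}$ has finite intersection with some $B\in\mathcal B$; (iii) $\mathrm{pr}:\lambda\times\lambda\to\lambda$ is a bijection with $\mathrm{pr}(\alpha_1,\alpha_2)\ge\alpha_1,\alpha_2$. Then there is a sequence $\langle\bar\eta^\alpha:\alpha\le\lambda\rangle$ such that: (a) $\bar\eta^\alpha\in\mathbf S_{\bar A}$ for $\alpha<\lambda$, and $\bar\eta^\lambda\in\mathbf S$; (b) $\langle\bar\eta^\alpha:\alpha\le\lambda\rangle$ is $\le^*$-increasing; (c) for each $\alpha<\lambda$, for all sufficiently large $n\in\mathrm{dom}(\bar\eta^{\alpha+1})$ we have $\mathrm{set}(\eta^{\alpha+1}_n)\cap B_\alpha\neq\emptyset$; (d)+(e) if $\alpha=\mathrm{pr}(\beta,\gamma)$, then for every choice of $X\in\{B_\beta\}\cup\{A_\beta:\beta<\kappa\}$ and $Y\in\{B_\gamma\}\cup\{A_\gamma:\gamma<\kappa\}$ (i.e. $X=B_\beta$, or $X=A_\beta$ when $\beta<\kappa$; likewise for $Y$), for every $n\in\mathrm{dom}(\bar\eta^{\alpha+1})$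 we have $\mathrm{set}(\eta^{\alpha+1}_n)\cap X\neq\emptyset$ and $\mathrm{set}(\eta^{\alpha+1}_n)\cap Y\neq\emptyset$, and the truth value of $\min(\mathrm{set}(\eta^{\alpha+1}_n)\cap X)<\min(\mathrm{set}(\eta^{\alpha+1}_n)\cap Y)$ is the same for all $n\in\mathrm{dom}(\bar\eta^{\alpha+1})$.
   Context: $[\omega]^{\aleph_0}$ is the set of infinite subsets of $\omega$; $A\subseteq^*B$ means $A\setminus B$ is finite; $A$ is a pseudo-intersection of $\mathcal C$ if $A\in[\omega]^{\aleph_0}$ and $A\subseteq^*C$ for all $C\in\mathcal C$. $\mathfrak p$ is the least cardinality of a family $\mathcal B\subseteq[\omega]^{\aleph_0}$ all of whose finite subfamilies have infinite intersection but which has no pseudo-intersection; $\mathfrak t$ is the least length of a $\subseteq^*$-decreasing sequence in $[\omega]^{\aleph_0}$ with no pseudo-intersection. $\mathcal B$ exemplifies $\mathfrak p$ if it is closed under finite intersections, has no pseudo-intersection, and $|\mathcal B|=\mathfrak p$. $\mathbf S$ is the family of all sequences $\bar\eta=\langle\eta_n:n\in B\rangle$ with $B\subseteq\omega$ infinite such that for each $n\in B$, $\eta_n$ is a function from $[n,k)$ to $\{0,1\}$ for some $k\in(n,\omega)$; $\mathrm{dom}(\bar\eta)=B$, $\mathrm{set}(\eta_n)=\{\ell:\eta_n(\ell)=1\}$, $\mathrm{set}(\bar\eta)=\bigcup_n\mathrm{set}(\eta_n)$. $\mathbf S_{\bar A}$ is the set of $\bar\eta\in\mathbf S$ with $\mathrm{set}(\bar\eta)\subseteq^*A_i$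 for all $i<\kappa$ and $\mathrm{set}(\eta_n)\ne\emptyset$ for all $n\in\mathrm{dom}(\bar\eta)$. $\eta\trianglelefteq\nu$ means $\nu$ extends $\eta$; $\bar\eta\le^*\bar\nu$ means that for all sufficiently large $n$, if $n\in\mathrm{dom}(\bar\nu)$ then $n\in\mathrm{dom}(\bar\eta)$ and $\eta_n\trianglelefteq\nu_n$. *)

(* Subsets of omega are predicates nat -> Prop.
   Ordinals <= lambda are modelled by a type L with a strict well-order ltL
   (lambda = order type of L); ordinals < lambda are elements of L,
   lambda itself is treated separately. *)
From Stdlib Require Import List Arith Relations Wellfounded.

Definition nset := nat -> Prop.

Definition finiteN (A : nset) : Prop := exists N, forall n, A n -> n < N.
Definition infiniteN (A : nset) : Prop := ~ finiteN A.

Definition subseteq_star (A B : nset) : Prop := finiteN (fun n => A n /\ ~ B n).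

Definition pseudo_int (C : nset -> Prop) (A : nset) : Prop :=
  infiniteN A /\ forall X, C X -> subseteq_star A X.

Definition range_of {I : Type} (F : I -> nset) : nset -> Prop :=
  fun X => exists i, X = F i.

Definition sfip {I : Type} (F : I -> nset) : Prop :=
  forall s : list I, infiniteN (fun n => forall i, In i s -> F i n).

Definition p_family {I : Type} (F : I -> nset) : Prop :=
  sfip F /\ ~ (exists A, pseudo_int (range_of F) A).

Definition card_le (T U : Type) : Prop := exists f : T -> U, forall x y, f x = f y -> x = y.

Definition strict_well_order {L : Type} (lt : L -> L -> Prop) : Prop :=
  (forall a, ~ lt a a) /\ (forall a b c, lt a b -> lt b c -> lt a c) /\
  (forall a b, lt a b \/ a = b \/ lt b a) /\ well_founded lt.

Definition seg {L : Type} (lt : L -> L -> Prop) (x : L) : Type := {y : L | lt y x}.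

(* (L, lt) is (the order type of) the cardinal p:
   an initial ordinal, whose cardinality is the least cardinality of a family
   with the SFIP and no pseudo-intersection. *)
Definition lambda_is_p (L : Type) (lt : L -> L -> Prop) : Prop :=
  strict_well_order lt /\
  (forall x : L, ~ card_le L (seg lt x)) /\
  (exists F : L -> nset, p_family F) /\
  (forall (I : Type) (F : I -> nset), p_family F -> card_le L I).

(* p < t, with lambda = p the order type of (L, lt): every
   \subseteq^*-decreasing sequence in [omega]^aleph0 whose length is <= lambda
   (i.e. indexed by a subset of L with the induced order) has a pseudo-intersection. *)
Definition p_lt_t (L : Type) (lt : L -> L -> Prop) : Prop :=
  forall (Sx : L -> Prop) (D : L -> nset),
    (forall a, Sx a -> infiniteN (D a)) ->
    (forall a b, Sx a -> Sx b -> lt a b -> subseteq_star (D b) (D a)) ->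
    exists A, pseudo_int (fun X => exists a, Sx a /\ X = D a) A.

Definition exemplifies_p (L : Type) (B : L -> nset) : Prop :=
  (forall a, infiniteN (B a)) /\
  (forall a b, exists c, forall n, B c n <-> (B a n /\ B b n)) /\
  ~ (exists A, pseudo_int (range_of B) A) /\
  card_le L {X : nset | range_of B X} /\ card_le {X : nset | range_of B X} L.

Definition regular_cardinal {L : Type} (lt : L -> L -> Prop) (kappa : L) : Prop :=
  (forall b, lt b kappa -> ~ card_le (seg lt kappa) (seg lt b)) /\
  card_le nat (seg lt kappa) /\
  (forall X : L -> Prop, (forall x, X x -> lt x kappa) ->
     (forall i, lt i kappa -> exists x, X x /\ (i = x \/ lt i x)) ->
     card_le (seg lt kappa) {x : L | X x}).

(* elements of the family S: eta_n for n in sdom is the function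
   [n, send n) -> {0,1}, l |-> sval n l. Values outside are irrelevant. *)
Record seqS := mkS { sdom : nat -> Prop; send : nat -> nat; sval : nat -> nat -> bool }.

Definition inS (e : seqS) : Prop :=
  infiniteN (sdom e) /\ forall n, sdom e n -> n < send e n.

Definition setn (e : seqS) (n : nat) : nset :=
  fun l => n <= l /\ l < send e n /\ sval e n l = true.

Definition setS (e : seqS) : nset := fun l => exists n, sdom e n /\ setn e n l.

Definition inSA {L : Type} (lt : L -> L -> Prop) (kappa : L) (A : L -> nset) (e : seqS) : Prop :=
  inS e /\ (forall i, lt i kappa -> subseteq_star (setS e) (A i)) /\
  (forall n, sdom e n -> exists l, setn e n l).

Definition extends_at (e v : seqS) (n : nat) : Prop :=
  send e n <= send v n /\ forall l, n <= l -> l < send e n -> sval e n l = sval v n l.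

Definition le_star (e v : seqS) : Prop :=
  exists N, forall n, N <= n -> sdom v n -> sdom e n /\ extends_at e v n.

Definition is_succ {L : Type} (lt : L -> L -> Prop) (a a' : L) : Prop :=
  lt a a' /\ forall c, ~ (lt a c /\ lt c a').

Definition is_min (P : nset) (m : nat) : Prop := P m /\ forall k, P k -> m <= k.

Definition choiceXY {L : Type} (lt : L -> L -> Prop) (kappa : L) (A B : L -> nset)
  (b : L) (X : nset) : Prop := X = B b \/ (lt b kappa /\ X = A b).

From Stdlib Require Import List Arith Lia Wf_nat.
From Stdlib Require Import Classical ClassicalEpsilon FunctionalExtensionality.
From Stdlib Require Cantor.
Import ListNotations.

(* The sequence is built by recursion on [alpha < lambda], keeping each [eta^alpha] in
   [S_A] and sparse: every segment [eta_n] ends before the next point of the domain.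
   At a successor [alpha + 1], with [alpha = pr(b, g)], p < t gives a pseudo-intersection
   of the [A_i /\ B_c] for [B_c] inside [B_alpha /\ B_b /\ B_g]; each segment is
   prolonged by one point of it lying in all the relevant [X], [Y], and the domain is
   thinned out by pigeonhole so that the order of the minima no longer depends on [n].
   At a limit [delta], finite segments are coded by natural numbers: the requirements
   "extends [eta^x]" ([x < delta]) and "has its points in [A_i]" ([i < kappa]) become
   fewer than p sets of codes with the finite intersection property, and decoding a
   pseudo-intersection gives the bound.  At [lambda] itself the corresponding sets of
   codes, with windows cut at consecutive points of a pseudo-intersection of all the
   domains, form a decreasing sequence of length [lambda < t]. *)

(** * Subsets of omega *)

Lemma infiniteN_unbounded (X : nset) : infiniteN X <-> forall K, exists n, K <= n /\ X n.
Proof.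
  split.
  - intros HX K. apply NNPP. intros Hno. apply HX. exists K. intros n Xn.
    destruct (le_lt_dec K n) as [HKn|]; [|assumption]. exfalso. eauto.
  - intros HX [N HN]. destruct (HX N) as [n [HNn Xn]]. specialize (HN n Xn). lia.
Qed.

Lemma finiteN_sub (X Y : nset) : finiteN Y -> (forall n, X n -> Y n) -> finiteN X.
Proof. intros [N HN] HXY. exists N. auto. Qed.

Lemma finiteN_or (X Y : nset) : finiteN X -> finiteN Y -> finiteN (fun n => X n \/ Y n).
Proof.
  intros [N1 H1] [N2 H2]. exists (N1 + N2).
  intros n [Xn|Yn]; [apply H1 in Xn|apply H2 in Yn]; lia.
Qed.

Lemma infiniteN_sub (X Y : nset) : infiniteN X -> (forall n, X n -> Y n) -> infiniteN Y.
Proof. intros HX HXY HY. apply HX. exact (finiteN_sub X Y HY HXY). Qed.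

Lemma subseteq_starP (X Y : nset) :
  subseteq_star X Y <-> exists M, forall n, M <= n -> X n -> Y n.
Proof.
  split.
  - intros [N HN]. exists N. intros n HNn Xn. apply NNPP. intros Yn.
    specialize (HN n (conj Xn Yn)). lia.
  - intros [M HM]. exists M. intros n [Xn Yn].
    destruct (le_lt_dec M n); [|assumption]. exfalso. auto.
Qed.

Lemma subseteq_star_subl (Z X Y : nset) :
  (forall n, Z n -> X n) -> subseteq_star X Y -> subseteq_star Z Y.
Proof. rewrite !subseteq_starP. intros HZX [M HM]. exists M. auto. Qed.

Lemma subseteq_star_subr (X Y Z : nset) :
  subseteq_star X Y -> (forall n, Y n -> Z n) -> subseteq_star X Z.
Proof. rewrite !subseteq_starP. intros [M HM] HYZ. exists M. auto. Qed.

Lemma subseteq_star_or (X Y Z : nset) :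
  subseteq_star X Z -> subseteq_star Y Z -> subseteq_star (fun n => X n \/ Y n) Z.
Proof.
  rewrite !subseteq_starP. intros [M1 H1] [M2 H2]. exists (M1 + M2).
  intros n Hn [Xn|Yn]; [apply H1|apply H2]; auto; lia.
Qed.

Lemma subseteq_star_imp (C : Prop) (X Y : nset) :
  (C -> subseteq_star X Y) -> subseteq_star X (fun n => C -> Y n).
Proof.
  intros HC. destruct (classic C) as [c|nc].
  - apply (subseteq_star_subr X Y); auto.
  - apply subseteq_starP. exists 0. intros n _ _ c. contradiction.
Qed.

Lemma eventually_list {T : Type} (s : list T) (Q : T -> nat -> Prop) :
  (forall x, In x s -> exists N, forall t, N <= t -> Q x t) ->
  exists N, forall t, N <= t -> forall x, In x s -> Q x t.
Proof.
  induction s as [|a s IH]; intros Hs.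
  - exists 0. intros t _ x [].
  - destruct (Hs a (or_introl eq_refl)) as [N1 H1].
    destruct IH as [N2 H2]; [intros x Hx; apply Hs; right; exact Hx|].
    exists (N1 + N2). intros t Ht x [<-|Hx]; [apply H1|apply H2]; auto; lia.
Qed.

Lemma infiniteN_inter_list (P : nset) (Xs : list nset) :
  infiniteN P -> (forall X, In X Xs -> subseteq_star P X) ->
  infiniteN (fun n => P n /\ forall X, In X Xs -> X n).
Proof.
  intros HP HXs. destruct (eventually_list Xs (fun X t => P t -> X t)) as [N HN].
  { intros X HX. apply subseteq_starP. auto. }
  apply infiniteN_unbounded. intros K.
  destruct (proj1 (infiniteN_unbounded P) HP (K + N)) as [n [Hn Pn]].
  exists n. split; [lia|]. split; [exact Pn|]. intros X HX. apply HN; auto; lia.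
Qed.

Lemma infinite_constant (D : nset) (Q : nat -> Prop) : infiniteN D ->
  exists D', (forall t, D' t -> D t) /\ infiniteN D' /\
    forall t1 t2, D' t1 -> D' t2 -> (Q t1 <-> Q t2).
Proof.
  intros HD. destruct (classic (infiniteN (fun t => D t /\ Q t))) as [HQ|HQ].
  - exists (fun t => D t /\ Q t). split; [tauto|]. split; [exact HQ|].
    intros t1 t2 [_ ?] [_ ?]. tauto.
  - exists (fun t => D t /\ ~ Q t). split; [tauto|]. split.
    + intros HnQ. apply HD. apply NNPP in HQ. apply (finiteN_sub _ _ (finiteN_or _ _ HQ HnQ)).
      intros n Dn. destruct (classic (Q n)); auto.
    + intros t1 t2 [_ ?] [_ ?]. tauto.
Qed.

Lemma infinite_constant_list (D : nset) (Qs : list (nat -> Prop)) : infiniteN D ->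
  exists D', (forall t, D' t -> D t) /\ infiniteN D' /\
    forall Q, In Q Qs -> forall t1 t2, D' t1 -> D' t2 -> (Q t1 <-> Q t2).
Proof.
  revert D. induction Qs as [|Q Qs IH]; intros D HD.
  - exists D. split; [auto|]. split; [exact HD|]. intros Q [].
  - destruct (IH D HD) as [D1 [D1D [HD1 HQs]]].
    destruct (infinite_constant D1 Q HD1) as [D2 [D2D1 [HD2 HQ]]].
    exists D2. split; [auto|]. split; [exact HD2|].
    intros Q' [<-|HQ'] t1 t2 Ht1 Ht2; [apply HQ|apply HQs]; auto.
Qed.

Lemma infinite_thin (D : nset) (h : nat -> nat) : infiniteN D ->
  exists D', (forall t, D' t -> D t) /\ infiniteN D' /\
    forall t t', D' t -> D' t' -> t < t' -> h t <= t'.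
Proof.
  intros HD. rewrite infiniteN_unbounded in HD.
  assert (next : forall K, {n | K <= n /\ D n}).
  { intros K. apply constructive_indefinite_description. auto. }
  pose (d := fix d i := match i with
                        | 0 => proj1_sig (next 0)
                        | S i => proj1_sig (next (max (h (d i)) (S (d i)))) end).
  assert (Hd : forall i, D (d i)) by (intros [|i]; apply (proj2_sig (next _))).
  assert (HdS : forall i, max (h (d i)) (S (d i)) <= d (S i))
    by (intros i; apply (proj2_sig (next _))).
  assert (Hmono : forall i j, i < j -> d i < d j /\ h (d i) <= d j).
  { intros i j Hij. induction Hij as [|j Hij IH]; [specialize (HdS i)|specialize (HdS j)]; lia. }
  exists (fun t => exists i, d i = t). split; [|split].
  - intros t [i <-]. apply Hd.
  - apply infiniteN_unbounded. intros K. exists (d K). split; [|eauto].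
    induction K as [|K IH]; [lia|]. specialize (HdS K). lia.
  - intros t t' [i <-] [j <-] Hlt. destruct (lt_eq_lt_dec i j) as [[Hij|<-]|Hji].
    + apply Hmono, Hij.
    + lia.
    + specialize (Hmono _ _ Hji). lia.
Qed.

Lemma partial_choice (R : nat -> nat -> Prop) :
  exists f : nat -> nat, forall t, (exists u, R t u) -> R t (f t).
Proof.
  assert (H : forall t, exists u, (exists u, R t u) -> R t u).
  { intros t. destruct (classic (exists u, R t u)) as [[u Hu]|Hno];
      [exists u; auto|exists 0; tauto]. }
  exists (fun t => proj1_sig (constructive_indefinite_description _ (H t))).
  intros t. exact (proj2_sig (constructive_indefinite_description _ (H t))).
Qed.

Lemma eventually_imp (C : Prop) (Q : nat -> Prop) :
  (C -> exists N, forall t, N <= t -> Q t) -> exists N, forall t, N <= t -> C -> Q t.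
Proof.
  intros HC. destruct (classic C) as [c|nc].
  - destruct (HC c) as [N HN]. exists N. auto.
  - exists 0. intros. contradiction.
Qed.

(** * Codes of finite 0-1 segments *)

Fixpoint bits (f : nat -> bool) (w : nat) : nat :=
  match w with
  | 0 => 0
  | S w => 2 * bits (fun j => f (S j)) w + Nat.b2n (f 0)
  end.

Lemma testbit_bits w : forall f j, j < w -> Nat.testbit (bits f w) j = f j.
Proof.
  induction w as [|w IH]; intros f j Hj; [lia|]. cbn [bits].
  destruct j as [|j]; [apply Nat.testbit_0_r|].
  rewrite Nat.testbit_succ_r. apply (IH (fun j => f (S j))). lia.
Qed.

Lemma bits_lt w : forall f, bits f w < 2 ^ w.
Proof.
  induction w as [|w IH]; intros f; cbn; [lia|].
  specialize (IH (fun j => f (S j))). destruct (f 0); cbn; lia.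
Qed.

(* [code t k m] codes the 0-1 segment on [[t, k)] whose value at [l] is bit [l - t] of [m]. *)
Definition code (t k m : nat) : nat := Cantor.to_nat (t, Cantor.to_nat (k, m)).
Definition dt (u : nat) : nat := fst (Cantor.of_nat u).
Definition dk (u : nat) : nat := fst (Cantor.of_nat (snd (Cantor.of_nat u))).
Definition dm (u : nat) : nat := snd (Cantor.of_nat (snd (Cantor.of_nat u))).

Lemma decode_code t k m : dt (code t k m) = t /\ dk (code t k m) = k /\ dm (code t k m) = m.
Proof.
  unfold dt, dk, dm, code. rewrite !Cantor.cancel_of_to; cbn [fst snd].
  rewrite !Cantor.cancel_of_to. auto.
Qed.

Lemma code_decode u : code (dt u) (dk u) (dm u) = u.
Proof.
  unfold dt, dk, dm, code. rewrite <- surjective_pairing, Cantor.cancel_to_of.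
  rewrite <- surjective_pairing. apply Cantor.cancel_to_of.
Qed.

Lemma Cantor_to_nat_mono a b a' b' :
  a <= a' -> b <= b' -> Cantor.to_nat (a, b) <= Cantor.to_nat (a', b').
Proof.
  intros Ha Hb. pose proof (Cantor.to_nat_spec a b). pose proof (Cantor.to_nat_spec a' b').
  assert ((b + a) * S (b + a) <= (b' + a') * S (b' + a')) by (apply Nat.mul_le_mono; lia). lia.
Qed.

Lemma code_mono t k m t' k' m' : t <= t' -> k <= k' -> m <= m' -> code t k m <= code t' k' m'.
Proof. intros. unfold code. apply Cantor_to_nat_mono; [|apply Cantor_to_nat_mono]; assumption. Qed.

Lemma code_ge t k m : t <= code t k m /\ k <= code t k m.
Proof.
  unfold code. pose proof (Cantor.to_nat_non_decreasing t (Cantor.to_nat (k, m))).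
  pose proof (Cantor.to_nat_non_decreasing k m). lia.
Qed.

Lemma dt_le u : dt u <= u.
Proof. rewrite <- (code_decode u) at 2. apply code_ge. Qed.

Lemma dk_le u : dk u <= u.
Proof. rewrite <- (code_decode u) at 2. apply code_ge. Qed.

Definition segment_code (e : seqS) (t k : nat) : nat :=
  code t k (bits (fun j => sval e t (t + j)) (k - t)).

Lemma segment_code_spec e t k :
  dt (segment_code e t k) = t /\ dk (segment_code e t k) = k /\
  forall l, t <= l -> l < k -> Nat.testbit (dm (segment_code e t k)) (l - t) = sval e t l.
Proof.
  unfold segment_code.
  destruct (decode_code t k (bits (fun j => sval e t (t + j)) (k - t))) as [-> [-> ->]].
  split; [reflexivity|]. split; [reflexivity|]. intros l Htl Hlk.
  rewrite testbit_bits by lia. f_equal. lia.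
Qed.

Definition matches (e : seqS) (t u : nat) : Prop :=
  send e t <= dk u /\ forall l, t <= l -> l < send e t -> sval e t l = Nat.testbit (dm u) (l - t).

Definition decode (D : nset) (uf : nat -> nat) : seqS :=
  mkS D (fun t => dk (uf t)) (fun t l => Nat.testbit (dm (uf t)) (l - t)).

Lemma extends_at_decode e D uf t : matches e t (uf t) -> extends_at e (decode D uf) t.
Proof. intros [Hk Hv]. split; [exact Hk|]. exact Hv. Qed.

Definition sparse (e : seqS) : Prop :=
  forall t t', sdom e t -> sdom e t' -> t < t' -> send e t <= t'.

Lemma le_star_refl e : le_star e e.
Proof. exists 0. intros n _ Hn. split; [exact Hn|]. split; auto. Qed.

Lemma le_star_trans e f g : le_star e f -> le_star f g -> le_star e g.
Proof.
  intros [N1 H1] [N2 H2]. exists (N1 + N2). intros n Hn Hg.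
  destruct (H2 n ltac:(lia) Hg) as [Hf [Hfg Vfg]]. destruct (H1 n ltac:(lia) Hf) as [He [Hef Vef]].
  split; [exact He|]. split; [lia|]. intros l Hnl Hl. rewrite Vef by assumption. apply Vfg; lia.
Qed.

Definition add_point (e : seqS) (D : nset) (p : nat -> nat) : seqS :=
  mkS D (fun t => S (p t)) (fun t l => if l <? send e t then sval e t l else l =? p t).

Lemma setn_add_point e D p t l : t < send e t -> send e t <= p t ->
  (setn (add_point e D p) t l <-> setn e t l \/ l = p t).
Proof.
  intros Hts Hsp. unfold setn, add_point; cbn [send sval].
  destruct (Nat.ltb_spec l (send e t)) as [Hl|Hl].
  - split; [intros (? & ? & ?); left; auto|].
    intros [(? & ? & ?)| ->]; [split; [|split]; auto; lia|lia].
  - rewrite Nat.eqb_eq. split; [intros (? & ? & ?); right; auto|].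
    intros [(? & ? & ?)| ->]; [lia|]. split; [lia|]. auto.
Qed.

Lemma extends_at_add_point e D p t : send e t <= p t -> extends_at e (add_point e D p) t.
Proof.
  intros Hsp. split; cbn [add_point send sval]; [lia|]. intros l _ Hl.
  destruct (Nat.ltb_spec l (send e t)); [reflexivity|lia].
Qed.

Definition meets (e : seqS) (X : nset) : Prop :=
  forall n, sdom e n -> exists l, setn e n l /\ X l.

Definition min_before (e : seqS) (X Y : nset) (n : nat) : Prop :=
  exists x y, is_min (fun l => setn e n l /\ X l) x /\ is_min (fun l => setn e n l /\ Y l) y /\
    x < y.

Definition same_order (e : seqS) (X Y : nset) : Prop :=
  forall n1 n2 x1 y1 x2 y2, sdom e n1 -> sdom e n2 ->
    is_min (fun l => setn e n1 l /\ X l) x1 -> is_min (fun l => setn e n1 l /\ Y l) y1 ->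
    is_min (fun l => setn e n2 l /\ X l) x2 -> is_min (fun l => setn e n2 l /\ Y l) y2 ->
    (x1 < y1 <-> x2 < y2).

Lemma is_min_unique (P : nset) x y : is_min P x -> is_min P y -> x = y.
Proof. intros [Px Hx] [Py Hy]. specialize (Hx y Py). specialize (Hy x Px). lia. Qed.

Lemma same_order_min_before e X Y :
  (forall n1 n2, sdom e n1 -> sdom e n2 -> (min_before e X Y n1 <-> min_before e X Y n2)) ->
  same_order e X Y.
Proof.
  intros Hconst n1 n2 x1 y1 x2 y2 Hn1 Hn2 Hx1 Hy1 Hx2 Hy2. specialize (Hconst n1 n2 Hn1 Hn2).
  split; intros Hlt.
  - destruct (proj1 Hconst (ex_intro _ x1 (ex_intro _ y1 (conj Hx1 (conj Hy1 Hlt)))))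
      as [x [y [Hx [Hy Hxy]]]].
    rewrite <- (is_min_unique _ _ _ Hx Hx2), <- (is_min_unique _ _ _ Hy Hy2). exact Hxy.
  - destruct (proj2 Hconst (ex_intro _ x2 (ex_intro _ y2 (conj Hx2 (conj Hy2 Hlt)))))
      as [x [y [Hx [Hy Hxy]]]].
    rewrite <- (is_min_unique _ _ _ Hx Hx1), <- (is_min_unique _ _ _ Hy Hy1). exact Hxy.
Qed.

Lemma le_star_decode e D uf M :
  (forall t, M <= t -> D t -> sdom e t /\ matches e t (uf t)) -> le_star e (decode D uf).
Proof.
  intros H. exists M. intros t Ht Dt. destruct (H t Ht Dt) as [Het Hm].
  split; [exact Het|]. apply extends_at_decode, Hm.
Qed.

Lemma transfinite_choice {L T : Type} (lt : L -> L -> Prop) (t0 : T) :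
  well_founded lt -> (forall a b c, lt a b -> lt b c -> lt a c) ->
  forall P : L -> (L -> T) -> T -> Prop,
  (forall a f g v, (forall b, lt b a -> f b = g b) -> P a f v -> P a g v) ->
  (forall a f, (forall b, lt b a -> P b f (f b)) -> exists v, P a f v) ->
  exists F : L -> T, forall a, P a F (F a).
Proof.
  intros Hwf Htr P Hext Hstep.
  pose (restrict := fun a (h : forall b, lt b a -> T) b =>
          match excluded_middle_informative (lt b a) with left Hb => h b Hb | right _ => t0 end).
  pose (step := fun a h =>
          match excluded_middle_informative (exists v, P a (restrict a h) v) with
          | left Hv => proj1_sig (constructive_indefinite_description _ Hv)
          | right _ => t0
          end).
  pose (F := Fix Hwf (fun _ => T) step).
  assert (HF : forall a, F a = step a (fun b _ => F b)).
  { intros a. apply (Fix_eq Hwf (fun _ => T) step). intros x h1 h2 H.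
    replace h2 with h1; [reflexivity|].
    apply functional_extensionality_dep. intros y. apply functional_extensionality_dep. apply H. }
  assert (Hres : forall a b, lt b a -> restrict a (fun b _ => F b) b = F b).
  { intros a b Hb. unfold restrict.
    destruct excluded_middle_informative; [reflexivity|contradiction]. }
  exists F. intros a. induction a as [a IH] using (well_founded_induction Hwf).
  assert (Hv : exists v, P a (restrict a (fun b _ => F b)) v).
  { apply Hstep. intros b Hb. rewrite Hres by exact Hb. apply (Hext b F); [|exact (IH b Hb)].
    intros c Hc. symmetry. apply Hres. eauto. }
  apply (Hext a (restrict a (fun b _ => F b))); [intros b Hb; apply Hres, Hb|].
  rewrite (HF a). unfold step at 1.
  destruct excluded_middle_informative as [Hv'|]; [|contradiction].
  exact (proj2_sig (constructive_indefinite_description _ Hv')).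
Qed.

Lemma list_max {L : Type} (lt : L -> L -> Prop) (P : L -> Prop) :
  (forall a b c, lt a b -> lt b c -> lt a c) -> (forall a b, lt a b \/ a = b \/ lt b a) ->
  forall s : list L, (exists x, In x s /\ P x) ->
  exists y, P y /\ forall x, In x s -> P x -> x = y \/ lt x y.
Proof.
  intros Htr Htot. induction s as [|a s IH]; intros [x [Hx Px]]; [destruct Hx|].
  destruct (classic (exists x, In x s /\ P x)) as [Hs|Hs].
  - destruct (IH Hs) as [y [Py Hy]]. destruct (classic (P a)) as [Pa|nPa].
    + destruct (Htot a y) as [Hay|[<-|Hya]].
      * exists y. split; [exact Py|]. intros z [<-|Hz] Pz; auto.
      * exists a. split; [exact Pa|]. intros z [<-|Hz] Pz; auto.
      * exists a. split; [exact Pa|]. intros z [<-|Hz] Pz; [auto|].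
        destruct (Hy z Hz Pz) as [->|Hzy]; eauto.
    + exists y. split; [exact Py|]. intros z [<-|Hz] Pz; [contradiction|auto].
  - destruct Hx as [Hax|Hx]; [subst a|exfalso; eauto].
    exists x. split; [exact Px|]. intros z [<-|Hz] Pz; [auto|exfalso; eauto].
Qed.

Section Construction.

Variables (L : Type) (lt : L -> L -> Prop).
Hypothesis lt_swo : strict_well_order lt.
Hypothesis L_initial : forall x, ~ card_le L (seg lt x).
Hypothesis L_le_p : forall (I : Type) (F : I -> nset), p_family F -> card_le L I.
Hypothesis p_lt_t_L : p_lt_t L lt.
Variable B : L -> nset.
Hypothesis B_meet : forall a b, exists c, forall n, B c n <-> (B a n /\ B b n).
Variable kappa : L.
Hypothesis kappa_infinite : card_le nat (seg lt kappa).
Variable A : L -> nset.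
Hypothesis A_infinite : forall i, lt i kappa -> infiniteN (A i).
Hypothesis A_decreasing :
  forall i j, lt i kappa -> lt j kappa -> lt i j -> subseteq_star (A j) (A i).
Hypothesis A_meets_B : forall i a, lt i kappa -> infiniteN (fun n => A i n /\ B a n).

Let lt_trans : forall a b c, lt a b -> lt b c -> lt a c := proj1 (proj2 lt_swo).
Let lt_total : forall a b, lt a b \/ a = b \/ lt b a := proj1 (proj2 (proj2 lt_swo)).
Let lt_wf : well_founded lt := proj2 (proj2 (proj2 lt_swo)).

(* [seg lt c] has size < [lambda = p], so it cannot index a family witnessing [p]. *)
Lemma small_sfip_pseudo_int (c : L) (F : L -> nset) :
  (forall s : list L, (forall x, In x s -> lt x c) ->
     infiniteN (fun n => forall x, In x s -> F x n)) ->
  exists P, infiniteN P /\ forall x, lt x c -> subseteq_star P (F x).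
Proof.
  intros Hsfip. apply NNPP. intros Hno. apply (L_initial c).
  apply (L_le_p (seg lt c) (fun y => F (proj1_sig y))). split.
  - intros s. assert (Hs : forall x, In x (map (@proj1_sig _ _) s) -> lt x c).
    { intros x Hx. apply in_map_iff in Hx. destruct Hx as [y [<- _]]. exact (proj2_sig y). }
    apply (infiniteN_sub _ _ (Hsfip _ Hs)). intros n Hn y Hy. apply Hn, in_map, Hy.
  - intros [P [HP HPF]]. apply Hno. exists P. split; [exact HP|].
    intros x Hx. apply HPF. exists (exist _ x Hx). reflexivity.
Qed.

Lemma kappa_nonzero : exists i0, lt i0 kappa.
Proof. destruct kappa_infinite as [f _]. exists (proj1_sig (f 0)). exact (proj2_sig (f 0)). Qed.

Definition good (e : seqS) : Prop := inSA lt kappa A e /\ sparse e.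

Lemma good_exists : exists e, good e.
Proof.
  destruct (p_lt_t_L (fun i => lt i kappa) A) as [Q [HQ HQA]]; [auto|auto|].
  exists (mkS Q S (fun _ _ => true)). split; [split; [|split]|].
  - split; cbn; auto.
  - intros i Hi. apply (subseteq_star_subl _ Q); [|apply HQA; exists i; auto].
    intros l [t [Qt [Htl [HlS _]]]]. cbn in *. replace l with t by lia. exact Qt.
  - intros n _. exists n. unfold setn; cbn; auto.
  - intros t t' _ _ Htt'. cbn. lia.
Qed.

Lemma B_inter_list (s : list L) : exists c, forall n, B c n -> forall a, In a s -> B a n.
Proof.
  induction s as [|a s [c Hc]]; [exists kappa; intros n _ a []|].
  destruct (B_meet a c) as [d Hd]. exists d. intros n Bdn a' [<-|Ha']; apply Hd in Bdn; [tauto|].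
  apply Hc; tauto.
Qed.

Lemma successor_target a0 b g : exists P, infiniteN P /\
  (forall i, lt i kappa -> subseteq_star P (A i)) /\
  forall n, P n -> B a0 n /\ (forall X, choiceXY lt kappa A B b X -> X n) /\
                   (forall Y, choiceXY lt kappa A B g Y -> Y n).
Proof.
  destruct (B_inter_list [a0; b; g]) as [c Hc].
  destruct (p_lt_t_L (fun i => lt i kappa) (fun i n => A i n /\ B c n)) as [P [HP HPAB]].
  { intros i Hi. apply A_meets_B, Hi. }
  { intros i j Hi Hj Hij. apply subseteq_starP.
    destruct (proj1 (subseteq_starP _ _) (A_decreasing i j Hi Hj Hij)) as [M HM].
    exists M. intros n Hn [Ajn Bcn]. auto. }
  assert (HPA : forall i, lt i kappa -> subseteq_star P (fun n => A i n /\ B c n)).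
  { intros i Hi. apply HPAB. exists i. auto. }
  pose (Xs := [B c; fun n => lt b kappa -> A b n; fun n => lt g kappa -> A g n]).
  exists (fun n => P n /\ forall X, In X Xs -> X n). split; [|split].
  - apply infiniteN_inter_list; [exact HP|]. destruct kappa_nonzero as [i0 Hi0].
    intros X [<-|[<-|[<-|[]]]].
    + apply (subseteq_star_subr _ _ _ (HPA i0 Hi0)). tauto.
    + apply subseteq_star_imp. intros Hb. apply (subseteq_star_subr _ _ _ (HPA b Hb)). tauto.
    + apply subseteq_star_imp. intros Hg. apply (subseteq_star_subr _ _ _ (HPA g Hg)). tauto.
  - intros i Hi. apply (subseteq_star_subl _ P); [tauto|].
    apply (subseteq_star_subr _ _ _ (HPA i Hi)). tauto.
  - intros n [_ HX].
    assert (Bn : forall a, In a [a0; b; g] -> B a n) by (apply Hc, (HX (B c)); cbn; auto).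
    assert (Abn : lt b kappa -> A b n) by (apply (HX (fun n => lt b kappa -> A b n)); cbn; auto).
    assert (Agn : lt g kappa -> A g n) by (apply (HX (fun n => lt g kappa -> A g n)); cbn; auto).
    split; [apply Bn; cbn; auto|].
    split; intros X [->|[Hlt ->]]; auto; apply Bn; cbn; auto.
Qed.

Lemma good_add_point e D p P : good e ->
  (forall i, lt i kappa -> subseteq_star P (A i)) ->
  (forall t, sdom e t -> send e t <= p t /\ P (p t)) ->
  (forall t, D t -> sdom e t) -> infiniteN D ->
  (forall t t', D t -> D t' -> t < t' -> S (p t) <= t') ->
  good (add_point e D p).
Proof.
  intros [[[_ Hsend] [HeA _]] _] HPA Hp HDe HD Hthin.
  assert (Hset : forall t l, D t -> setn (add_point e D p) t l -> setn e t l \/ l = p t).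
  { intros t l Ht. apply setn_add_point; [apply Hsend, HDe, Ht|apply Hp, HDe, Ht]. }
  split; [split; [split|split]|].
  - exact HD.
  - intros t Ht. cbn. specialize (Hsend t (HDe t Ht)). specialize (Hp t (HDe t Ht)). lia.
  - intros i Hi. apply (subseteq_star_subl _ (fun l => setS e l \/ P l)).
    + intros l [t [Ht Hl]]. destruct (Hset t l Ht Hl) as [Hl'| ->]; [left; exists t; auto|].
      right. apply Hp, HDe, Ht.
    + apply subseteq_star_or; auto.
  - intros t Ht. exists (p t). apply setn_add_point; [apply Hsend, HDe, Ht|apply Hp, HDe, Ht|auto].
  - exact Hthin.
Qed.

Lemma successor_step e a0 b g : good e ->
  exists nu, good nu /\ le_star e nu /\ meets nu (B a0) /\
    forall X Y, choiceXY lt kappa A B b X -> choiceXY lt kappa A B g Y ->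
      meets nu X /\ meets nu Y /\ same_order nu X Y.
Proof.
  intros He. pose proof He as [[[Hinf Hsend] _] _].
  destruct (successor_target a0 b g) as [P [HP [HPA HPX]]].
  destruct (partial_choice (fun t u => send e t <= u /\ P u)) as [p Hp].
  assert (Hp' : forall t, send e t <= p t /\ P (p t)).
  { intros t. apply Hp. apply infiniteN_unbounded, HP. }
  (* Pigeonhole over the four pairs [(X, Y)] fixes the order of the two minima. *)
  pose (e0 := add_point e (sdom e) p).
  pose (Qs := map (fun XY => min_before e0 (fst XY) (snd XY)) (list_prod [B b; A b] [B g; A g])).
  destruct (infinite_constant_list (sdom e) Qs Hinf) as [D1 [D1e [HD1 HQs]]].
  destruct (infinite_thin D1 (fun t => S (p t)) HD1) as [D [DD1 [HD Hthin]]].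
  assert (Hmeet : forall X, (forall n, P n -> X n) -> meets (add_point e D p) X).
  { intros X HX t Ht. exists (p t). split; [|apply HX, Hp'].
    apply setn_add_point; [apply Hsend, D1e, DD1, Ht|apply Hp'|auto]. }
  exists (add_point e D p). split; [|split; [|split]].
  - apply (good_add_point e D p P); auto.
  - exists 0. intros t _ Ht. split; [apply D1e, DD1, Ht|]. apply extends_at_add_point, Hp'.
  - apply Hmeet. intros n Pn. apply (proj1 (HPX n Pn)).
  - intros X Y HX HY. split; [|split].
    + apply Hmeet. intros n Pn. apply (proj1 (proj2 (HPX n Pn))), HX.
    + apply Hmeet. intros n Pn. apply (proj2 (proj2 (HPX n Pn))), HY.
    + apply same_order_min_before. intros n1 n2 Hn1 Hn2.
      refine (HQs (min_before e0 X Y) _ n1 n2 (DD1 _ Hn1) (DD1 _ Hn2)).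
      apply in_map_iff. exists (X, Y). split; [reflexivity|].
      apply in_prod; [destruct HX as [->|[_ ->]]|destruct HY as [->|[_ ->]]]; cbn; auto.
Qed.

Lemma common_upper_bound a b :
  exists c, (forall x, lt x a -> lt x c) /\ (forall x, lt x b -> lt x c).
Proof.
  destruct (lt_total a b) as [Hab|[<-|Hba]].
  - exists b. split; eauto.
  - exists a. auto.
  - exists a. split; eauto.
Qed.

Lemma kappa_enumeration :
  exists en : nat -> L, (forall n, lt (en n) kappa) /\ (forall n m, en n = en m -> n = m).
Proof.
  destruct kappa_infinite as [f Hf]. exists (fun n => proj1_sig (f n)).
  split; [intros n; exact (proj2_sig (f n))|]. intros n m Hnm. apply Hf.
  destruct (f n) as [a Ha], (f m) as [b Hb]. cbn in Hnm. subst b. f_equal. apply proof_irrelevance.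
Qed.

Definition nonempty_code (u : nat) : Prop :=
  exists l, dt u <= l /\ l < dk u /\ Nat.testbit (dm u) (l - dt u) = true.

Section Limit.

Variables (delta : L) (eta : L -> seqS).
Hypothesis eta_good : forall x, lt x delta -> good (eta x).
Hypothesis eta_chain : forall x y, lt x y -> lt y delta -> le_star (eta x) (eta y).
Variable en : nat -> L.
Hypothesis en_kappa : forall n, lt (en n) kappa.
Hypothesis en_inj : forall n m, en n = en m -> n = m.

(* The clause on [en] forces [dt u] to be unbounded on any pseudo-intersection of these sets. *)
Definition limit_codes (x : L) (u : nat) : Prop :=
  (lt x delta -> sdom (eta x) (dt u) /\ matches (eta x) (dt u) u) /\
  (lt x kappa ->
     forall l, dt u <= l -> l < dk u -> Nat.testbit (dm u) (l - dt u) = true -> A x l) /\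
  (forall n, en n = x -> n <= dt u) /\
  nonempty_code u.

Lemma chain_bound_list (s : list L) :
  exists bb, good bb /\ forall x, In x s -> lt x delta -> le_star (eta x) bb.
Proof.
  destruct (classic (exists x, In x s /\ lt x delta)) as [Hs|Hs].
  - destruct (list_max lt (fun x => lt x delta) lt_trans lt_total s Hs) as [y [Hy Hmax]].
    exists (eta y). split; [auto|]. intros x Hx Hxd.
    destruct (Hmax x Hx Hxd) as [->|Hxy]; [apply le_star_refl|auto].
  - destruct good_exists as [bb Hbb]. exists bb. split; [exact Hbb|].
    intros x Hx Hxd. exfalso. eauto.
Qed.

Lemma limit_codes_segment bb x : good bb -> (lt x delta -> le_star (eta x) bb) ->
  exists N, forall t, N <= t -> sdom bb t -> limit_codes x (segment_code bb t (send bb t)).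
Proof.
  intros [[_ [HbA Hbne]] _] Hle.
  destruct (eventually_imp (lt x delta)
             (fun t => sdom bb t -> sdom (eta x) t /\ extends_at (eta x) bb t)) as [N1 H1];
    [intros Hx; destruct (Hle Hx) as [N HN]; exists N; auto|].
  destruct (eventually_imp (lt x kappa) (fun t => forall l, setn bb t l -> sdom bb t -> A x l))
    as [N2 H2].
  { intros Hx. destruct (proj1 (subseteq_starP _ _) (HbA x Hx)) as [N HN].
    exists N. intros t Ht l Hl Hbt. apply HN; [destruct Hl; lia|]. exists t. auto. }
  destruct (eventually_imp (exists n0, en n0 = x) (fun t => forall n, en n = x -> n <= t))
    as [N3 H3].
  { intros [n0 Hn0]. exists n0. intros t Ht n Hn. rewrite <- Hn0 in Hn. apply en_inj in Hn. lia. }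
  exists (N1 + N2 + N3). intros t Ht Hbt.
  destruct (segment_code_spec bb t (send bb t)) as [Et [Ek Em]].
  unfold limit_codes, nonempty_code, matches. rewrite Et, Ek. split; [|split; [|split]].
  - intros Hx. destruct (H1 t ltac:(lia) Hx Hbt) as [Hxt [Hs Hv]]. split; [exact Hxt|].
    split; [exact Hs|]. intros l Htl Hl. rewrite Em by lia. apply Hv; lia.
  - intros Hx l Htl Hl Hbit. rewrite Em in Hbit by lia.
    apply (H2 t ltac:(lia) Hx l); [split; auto|exact Hbt].
  - intros n Hn. apply (H3 t ltac:(lia)); [exists n|]; exact Hn.
  - destruct (Hbne t Hbt) as [l [Htl [Hl Hbit]]]. exists l. rewrite Em; auto.
Qed.

Lemma limit_codes_sfip (s : list L) : infiniteN (fun u => forall x, In x s -> limit_codes x u).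
Proof.
  destruct (chain_bound_list s) as [bb [Hbb Hle]].
  destruct (eventually_list s
             (fun x t => sdom bb t -> limit_codes x (segment_code bb t (send bb t)))) as [N HN];
    [intros x Hx; apply limit_codes_segment; auto|].
  apply infiniteN_unbounded. intros K. destruct Hbb as [[[Hbi _] _] _].
  destruct (proj1 (infiniteN_unbounded _) Hbi (K + N)) as [t [Ht Hbt]].
  exists (segment_code bb t (send bb t)). split; [|intros x Hx; apply HN; auto; lia].
  pose proof (dt_le (segment_code bb t (send bb t))).
  rewrite (proj1 (segment_code_spec bb t _)) in *. lia.
Qed.

Lemma limit_step : exists nu, good nu /\ forall x, lt x delta -> le_star (eta x) nu.
Proof.
  destruct (common_upper_bound delta kappa) as [c [Hdc Hkc]].
  destruct (small_sfip_pseudo_int c limit_codes (fun s _ => limit_codes_sfip s)) as [P [HP HPc]].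
  assert (HPx : forall x, lt x c -> exists M, forall u, M <= u -> P u -> limit_codes x u).
  { intros x Hx. apply subseteq_starP, HPc, Hx. }
  pose (R := fun t u => P u /\ dt u = t /\ nonempty_code u).
  destruct (partial_choice R) as [uf Huf].
  assert (HDom : infiniteN (fun t => exists u, R t u)).
  { apply infiniteN_unbounded. intros K. destruct (HPx (en K) (Hkc _ (en_kappa K))) as [M HM].
    destruct (proj1 (infiniteN_unbounded _) HP M) as [u [Hu Pu]].
    destruct (HM u Hu Pu) as [_ [_ [HK Hne]]]. exists (dt u). split; [apply HK; auto|]. exists u. 
    split; auto. }
  destruct (infinite_thin _ (fun t => dk (uf t)) HDom) as [D [HDDom [HD Hthin]]].
  assert (HRuf : forall t, D t -> R t (uf t)) by (intros t Dt; apply Huf, HDDom, Dt).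
  exists (decode D uf). split; [split; [split; [split|split]|]|].
  - exact HD.
  - intros t Dt. destruct (HRuf t Dt) as [_ [Hdt [l Hl]]]. cbn. lia.
  - intros i Hi. destruct (HPx i (Hkc i Hi)) as [M HM]. apply subseteq_starP. exists M.
    intros l Hl [t [Dt [Htl [Hlk Hbit]]]]. cbn in *. destruct (HRuf t Dt) as [Pu [Hdt _]].
    pose proof (dk_le (uf t)). destruct (HM (uf t) ltac:(lia) Pu) as [_ [HA _]].
    rewrite Hdt in HA. apply (HA Hi l Htl Hlk Hbit).
  - intros t Dt. destruct (HRuf t Dt) as [_ [Hdt [l Hl]]]. rewrite Hdt in Hl. exists l. exact Hl.
  - exact Hthin.
  - intros x Hx. destruct (HPx x (Hdc x Hx)) as [M HM]. apply (le_star_decode _ _ _ M).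
    intros t Ht Dt. destruct (HRuf t Dt) as [Pu [Hdt _]]. pose proof (dt_le (uf t)).
    destruct (HM (uf t) ltac:(lia) Pu) as [Hm _]. rewrite Hdt in Hm. apply Hm, Hx.
Qed.

End Limit.

Section Final.

Variable eta : L -> seqS.
Hypothesis eta_sparse : forall x, sparse (eta x).
Hypothesis eta_chain : forall x y, lt x y -> le_star (eta x) (eta y).
Variable T : nset.
Hypothesis T_infinite : infiniteN T.
Hypothesis T_dom : forall x, subseteq_star T (sdom (eta x)).

Definition is_next (t k : nat) : Prop := T k /\ t < k /\ forall t', T t' -> t < t' -> k <= t'.

Lemma next_exists t : exists k, is_next t k.
Proof.
  destruct (proj1 (infiniteN_unbounded T) T_infinite (S t)) as [t1 [Ht1 Tt1]].
  destruct (dec_inh_nat_subset_has_unique_least_element (fun k => T k /\ t < k))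
    as [k [[[Tk Htk] Hk] _]]; [intros n; apply classic|exists t1; split; [exact Tt1|lia]|].
  exists k. split; [exact Tk|]. split; [exact Htk|]. intros t' Tt' Htt'. apply Hk. auto.
Qed.

(* Windows end at the next point of [T], so below any bound there are finitely many codes. *)
Definition next_code (u : nat) : Prop := T (dt u) /\ is_next (dt u) (dk u) /\ dm u < 2 ^ dk u.

Lemma next_code_bounded N t1 u : T t1 -> N < t1 -> next_code u -> dt u < N ->
  u <= code N t1 (2 ^ t1).
Proof.
  intros Tt1 HNt1 [_ [[_ [_ Hk]] Hm]] HuN.
  assert (dk u <= t1) by (apply Hk; [exact Tt1|lia]).
  assert (2 ^ dk u <= 2 ^ t1) by (apply Nat.pow_le_mono_r; lia).
  rewrite <- (code_decode u). apply code_mono; lia.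
Qed.

Definition final_codes (x : L) (u : nat) : Prop :=
  next_code u /\ (sdom (eta x) (dt u) -> send (eta x) (dt u) <= dk u -> matches (eta x) (dt u) u).

Lemma final_codes_infinite x : infiniteN (final_codes x).
Proof.
  apply infiniteN_unbounded. intros K.
  destruct (proj1 (infiniteN_unbounded T) T_infinite K) as [t [HKt Tt]].
  destruct (next_exists t) as [k Hk]. pose (u := segment_code (eta x) t k).
  destruct (segment_code_spec (eta x) t k) as [Et [Ek Em]]. fold u in Et, Ek, Em.
  exists u. split; [pose proof (dt_le u); lia|].
  unfold final_codes, next_code, matches. rewrite Et, Ek.
  split; [split; [exact Tt|split; [exact Hk|]]|].
  - unfold u, segment_code. rewrite (proj2 (proj2 (decode_code _ _ _))).
    eapply Nat.lt_le_trans; [apply bits_lt|]. apply Nat.pow_le_mono_r; lia.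
  - intros _ Hs. split; [exact Hs|]. intros l Htl Hl. rewrite Em; [reflexivity|lia|lia].
Qed.

Lemma final_codes_decreasing x y : lt x y -> subseteq_star (final_codes y) (final_codes x).
Proof.
  intros Hxy. destruct (eta_chain x y Hxy) as [N1 HN1].
  destruct (proj1 (subseteq_starP _ _) (T_dom y)) as [N2 HN2].
  destruct (proj1 (infiniteN_unbounded T) T_infinite (S (N1 + N2))) as [t1 [Ht1 Tt1]].
  apply subseteq_starP. exists (S (code (N1 + N2) t1 (2 ^ t1))). intros u Hu [Hcode Hmy].
  destruct (le_lt_dec (N1 + N2) (dt u)) as [Hge|Hlt];
    [|pose proof (next_code_bounded (N1 + N2) t1 u Tt1 ltac:(lia) Hcode Hlt); lia].
  split; [exact Hcode|]. intros Hxu Hsx. destruct Hcode as [Tu [[Tk [Hk _]] _]].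
  assert (Hyu : sdom (eta y) (dt u)) by (apply HN2; [lia|exact Tu]).
  destruct (HN1 (dt u) ltac:(lia) Hyu) as [_ [Hsxy Hv]].
  (* [eta y] is sparse and [dk u] is a later point of its domain: its segment fits the window. *)
  assert (Hsy : send (eta y) (dt u) <= dk u).
  { apply (eta_sparse y); [exact Hyu|apply HN2; [lia|exact Tk]|exact Hk]. }
  destruct (Hmy Hyu Hsy) as [_ Hm]. split; [exact Hsx|]. intros l Htl Hl.
  rewrite Hv by lia. apply Hm; lia.
Qed.

Lemma final_step_on : exists nu, inS nu /\ forall x, le_star (eta x) nu.
Proof.
  destruct (p_lt_t_L (fun _ => True) final_codes) as [P [HP HPx]].
  { intros x _. apply final_codes_infinite. }
  { intros x y _ _. apply final_codes_decreasing. }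
  assert (HPx' : forall x, exists M, forall u, M <= u -> P u -> final_codes x u).
  { intros x. apply subseteq_starP, HPx. exists x. auto. }
  pose (R := fun t u => P u /\ dt u = t /\ next_code u).
  destruct (partial_choice R) as [uf Huf].
  assert (HDom : infiniteN (fun t => exists u, R t u)).
  { apply infiniteN_unbounded. intros K. destruct (HPx' kappa) as [M HM].
    destruct (proj1 (infiniteN_unbounded T) T_infinite (S K)) as [t1 [Ht1 Tt1]].
    destruct (proj1 (infiniteN_unbounded _) HP (M + S (code K t1 (2 ^ t1)))) as [u [Hu Pu]].
    destruct (HM u ltac:(lia) Pu) as [Hcode _]. exists (dt u).
    destruct (le_lt_dec K (dt u)) as [HK|HK];
      [|pose proof (next_code_bounded K t1 u Tt1 ltac:(lia) Hcode HK); lia].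
    split; [exact HK|]. exists u. split; auto. }
  exists (decode (fun t => exists u, R t u) uf). split; [split|].
  - exact HDom.
  - intros t Dt. destruct (Huf t Dt) as [_ [Hdt [_ [[_ [Hk _]] _]]]]. cbn. lia.
  - intros x. destruct (HPx' x) as [M HM].
    destruct (proj1 (subseteq_starP _ _) (T_dom x)) as [N HN].
    apply (le_star_decode _ _ _ (M + N)). intros t Ht Dt.
    destruct (Huf t Dt) as [Pu [Hdt Hcode]]. pose proof (dt_le (uf t)).
    destruct (HM (uf t) ltac:(lia) Pu) as [_ Hm]. rewrite Hdt in Hm.
    destruct Hcode as [Tt [[Tk [Hk _]] _]]. rewrite Hdt in Tt, Hk.
    assert (Hxt : sdom (eta x) t) by (apply HN; [lia|exact Tt]).
    split; [exact Hxt|]. apply Hm; [exact Hxt|].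
    apply (eta_sparse x); [exact Hxt|apply HN; [lia|exact Tk]|exact Hk].
Qed.

End Final.

Lemma final_step (eta : L -> seqS) :
  (forall x, inS (eta x)) -> (forall x, sparse (eta x)) ->
  (forall x y, lt x y -> le_star (eta x) (eta y)) ->
  exists nu, inS nu /\ forall x, le_star (eta x) nu.
Proof.
  intros Hin Hsp Hchain.
  destruct (p_lt_t_L (fun _ => True) (fun x => sdom (eta x))) as [T [HT HTx]].
  { intros x _. apply Hin. }
  { intros x y _ _ Hxy. destruct (Hchain x y Hxy) as [N HN]. apply subseteq_starP. exists N.
    intros n Hn Hy. apply (HN n Hn Hy). }
  apply (final_step_on eta Hsp Hchain T HT). intros x. apply HTx. exists x. auto.
Qed.

Section Recursion.

Variable pr : L -> L -> L.
Hypothesis pr_inj : forall a1 a2 b1 b2, pr a1 a2 = pr b1 b2 -> a1 = b1 /\ a2 = b2.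
Hypothesis pr_surj : forall c, exists a1 a2, pr a1 a2 = c.

Definition succ_requirements (a : L) (nu : seqS) : Prop :=
  forall a0, is_succ lt a0 a ->
    meets nu (B a0) /\
    forall b g, pr b g = a0 ->
      forall X Y, choiceXY lt kappa A B b X -> choiceXY lt kappa A B g Y ->
        meets nu X /\ meets nu Y /\ same_order nu X Y.

Definition stage (a : L) (eta : L -> seqS) (nu : seqS) : Prop :=
  good nu /\ (forall b, lt b a -> le_star (eta b) nu) /\ succ_requirements a nu.

Lemma lt_succ_inv a0 a c : is_succ lt a0 a -> lt c a -> c = a0 \/ lt c a0.
Proof.
  intros [Ha0 Hno] Hc. destruct (lt_total c a0) as [H|[H|H]]; auto. exfalso. apply (Hno c). auto.
Qed.

Lemma successor_stage a0 a eta : is_succ lt a0 a ->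
  (forall b, lt b a -> stage b eta (eta b)) -> exists nu, stage a eta nu.
Proof.
  intros Hs IH. destruct (pr_surj a0) as [b [g Hbg]].
  destruct (IH a0 (proj1 Hs)) as [Hgood [Hbelow _]].
  destruct (successor_step (eta a0) a0 b g Hgood) as [nu [Hnu [Hle [HB HXY]]]].
  exists nu. split; [exact Hnu|split].
  - intros c Hc. destruct (lt_succ_inv a0 a c Hs Hc) as [->|Hca0]; [exact Hle|].
    apply (le_star_trans _ (eta a0)); auto.
  - intros a0' Hs'. assert (a0' = a0) as ->.
    { destruct (lt_succ_inv a0 a a0' Hs (proj1 Hs')) as [->|H]; [reflexivity|].
      exfalso. apply (proj2 Hs' a0). split; [exact H|apply Hs]. }
    split; [exact HB|]. intros b' g' Hbg' X Y HX HY.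
    rewrite <- Hbg in Hbg'. destruct (pr_inj _ _ _ _ Hbg') as [-> ->]. auto.
Qed.

Lemma limit_stage a eta : ~ (exists a0, is_succ lt a0 a) ->
  (forall b, lt b a -> stage b eta (eta b)) -> exists nu, stage a eta nu.
Proof.
  intros Hlim IH. destruct kappa_enumeration as [en [Hen Heninj]].
  destruct (limit_step a eta (fun x Hx => proj1 (IH x Hx))
              (fun x y Hxy Hy => proj1 (proj2 (IH y Hy)) x Hxy) en Hen Heninj) as [nu [Hnu Hle]].
  exists nu. split; [exact Hnu|split; [exact Hle|]]. intros a0 Hs. exfalso. eauto.
Qed.

Lemma construction : exists eta : L -> seqS, forall a, stage a eta (eta a).
Proof.
  destruct good_exists as [e0 _].
  apply (transfinite_choice lt e0 lt_wf lt_trans).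
  - intros a f g nu Hfg [Hnu [Hle Hreq]]. split; [exact Hnu|split; [|exact Hreq]].
    intros b Hb. rewrite <- Hfg by exact Hb. auto.
  - intros a f IH. destruct (classic (exists a0, is_succ lt a0 a)) as [[a0 Hs]|Hlim].
    + apply (successor_stage a0); auto.
    + apply limit_stage; auto.
Qed.

End Recursion.

End Construction.


Theorem lemma2p8
  (L : Type) (ltL : L -> L -> Prop)
  (Hp : lambda_is_p L ltL) (Hpt : p_lt_t L ltL)
  (B : L -> nset) (HB : exemplifies_p L B)
  (kappa : L) (Hkappa : regular_cardinal ltL kappa)
  (A : L -> nset)
  (HAinf : forall i, ltL i kappa -> infiniteN (A i))
  (HAdec : forall i j, ltL i kappa -> ltL j kappa -> ltL i j -> subseteq_star (A j) (A i))
  (HAB : forall i a, ltL i kappa -> infiniteN (fun n => A i n /\ B a n))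
  (HApi : forall X, pseudo_int (fun Y => exists i, ltL i kappa /\ Y = A i) X ->
            exists a, finiteN (fun n => X n /\ B a n))
  (pr : L -> L -> L)
  (Hpr_inj : forall a1 a2 b1 b2, pr a1 a2 = pr b1 b2 -> a1 = b1 /\ a2 = b2)
  (Hpr_surj : forall c, exists a1 a2, pr a1 a2 = c)
  (Hpr_ge : forall a1 a2, (a1 = pr a1 a2 \/ ltL a1 (pr a1 a2)) /\
                          (a2 = pr a1 a2 \/ ltL a2 (pr a1 a2))) :
  exists (eta : L -> seqS) (etaL : seqS),
    (* (a) *)
    (forall a, inSA ltL kappa A (eta a)) /\ inS etaL /\
    (* (b) *)
    (forall a b, ltL a b -> le_star (eta a) (eta b)) /\
    (forall a, le_star (eta a) etaL) /\
    (* (c) *)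
    (forall a a', is_succ ltL a a' ->
       exists N, forall n, N <= n -> sdom (eta a') n ->
         exists l, setn (eta a') n l /\ B a l) /\
    (* (d)+(e) *)
    (forall b g a', is_succ ltL (pr b g) a' ->
       forall X Y, choiceXY ltL kappa A B b X -> choiceXY ltL kappa A B g Y ->
         (forall n, sdom (eta a') n ->
            (exists l, setn (eta a') n l /\ X l) /\
            (exists l, setn (eta a') n l /\ Y l)) /\
         (forall n1 n2 x1 y1 x2 y2, sdom (eta a') n1 -> sdom (eta a') n2 ->
            is_min (fun l => setn (eta a') n1 l /\ X l) x1 ->
            is_min (fun l => setn (eta a') n1 l /\ Y l) y1 ->
            is_min (fun l => setn (eta a') n2 l /\ X l) x2 ->
            is_min (fun l => setn (eta a') n2 l /\ Y l) y2 ->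
            (x1 < y1 <-> x2 < y2))).
Proof.
  destruct Hp as [Hswo [Hinit [_ Hpfam]]].
  destruct HB as [_ [HBmeet _]].
  destruct Hkappa as [_ [Hknat _]].
  destruct (construction L ltL Hswo Hinit Hpfam Hpt B HBmeet kappa Hknat A HAinf HAdec HAB
              pr Hpr_inj Hpr_surj) as [eta Heta].
  assert (Hchain : forall a b, ltL a b -> le_star (eta a) (eta b)).
  { intros a b Hab. apply (Heta b), Hab. }
  destruct (final_step L ltL Hpt kappa eta) as [etaL [HL HLe]];
    [intros x; apply (Heta x)|intros x; apply (Heta x)|exact Hchain|].
  exists eta, etaL. split; [intros a; apply (Heta a)|]. split; [exact HL|].
  split; [exact Hchain|]. split; [exact HLe|]. split.
  - intros a a' Hs. exists 0. intros n _ Hn. apply (proj2 (proj2 (Heta a')) a Hs), Hn.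
  - intros b g a' Hs X Y HX HY.
    destruct (proj2 (proj2 (proj2 (Heta a')) _ Hs) b g eq_refl X Y HX HY) as [HmX [HmY Hord]].
    split; [intros n Hn; split; auto|exact Hord].
Qed.
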